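(* Let $S=\langle P,\varphi\rangle$ be a SUT model, $t$ a strength, $N\ge1$ an integer and $lb$ an integer with $0\le lb<CAN(t,S)$ and $lb+1\le N$. Let $m=N-(lb+1)$ be the number of variables $u_i$, and consider the Weighted Partial MaxSAT instance $\Phi$ defined in the context. If $N\ge CAN(t,S)$, the optimal cost of $\Phi$ is $CAN(t,S)-(lb+1)+(|\mathcal T_a|-T(N;t,S))\cdot(m+1)$; otherwise it is $N-(lb+1)+(|\mathcal T_a|-T(N;t,S))\cdot(m+1)$.
   Context: A SUT model is $S=\langle P,\varphi\rangle$, where $P$ is a finite set of parameters, each $p\in P$ having a finite nonempty domain $d(p)$, and $\varphi$ is a propositional formula whose atoms have the form $(p=v)$ with $p\in P$, $v\in d(p)$. A test case is a full assignment $A$ giving each $p$ a value in $d(p)$ such that $\varphi$ is true when each atom $(p=v)$ is read as true iff $A(p)=v$; it is assumed that at least one test case exists. Fix a strength $t$ with $1\le t\le|P|$. A $t$-tuple is an assignment of values to exactly $t$ distinct parameters, viewed as a set of pairs $(p,v)$; a test case covers $\tau$ if it assigns $v$ to $p$ for every $(p,v)\in\tau$. A $t$-tuple is allowed if some test case covers it; $\mathcal T_a$ is the set of allowed $t$-tuples. A covering array $CA(N;t,S)$ is a list of $N$ test cases (repetitions allowed) covering every allowed $t$-tuple; $CAN(t,S)$ is the minimum such $N$. $T(N;t,S)$ is the maximum number of $t$-tuples covered by a list of $N$ test cases. $[N]=\{1,\dots,N\}$. A Weighted Partial MaxSAT instance consists of hard constraints and soft clauses $(c,w)$ with positive integer weights;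 its optimal cost is the minimum, over truth assignments satisfying all hard constraints, of the total weight of falsified soft clauses ($\infty$ if the hard constraints are unsatisfiable). Variables: $x_{i,p,v}$ ($i\in[N]$, $p\in P$, $v\in d(p)$), $c^i_\tau$ and $c_\tau$ ($i\in[N]$, $\tau\in\mathcal T_a$), $u_i$ ($i\in\{lb+2,\dots,N\}$). Hard constraints of $\Phi$: (X) for every $i\in[N]$, $p\in P$: exactly one of $\{x_{i,p,v}:v\in d(p)\}$ is true; (SUTX) for every $i\in[N]$: the formula obtained from $\varphi$ by replacing each atom $(p=v)$ with $x_{i,p,v}$; (CX) for every $i\in[N]$, $\tau\in\mathcal T_a$, $(p,v)\in\tau$: $c^i_\tau\rightarrow x_{i,p,v}$; (RC) for every $\tau\in\mathcal T_a$: $c_\tau\leftrightarrow\bigvee_{i\in[N]}c^i_\tau$; (BSU) for every $i\in\{lb+2,\dots,N-1\}$: $u_{i+1}\rightarrow u_i$; (CU) for every $i\in\{lb+2,\dots,N\}$, $\tau\in\mathcal T_a$: $c^i_\tau\rightarrow u_i$. Soft clauses: $(\neg u_i,1)$ for every $i\in\{lb+2,\dots,N\}$, and $(c_\tau,m+1)$ for every $\tau\in\mathcal T_a$. *)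

From mathcomp Require Import all_boot.
Set Implicit Arguments.
Unset Strict Implicit.
Unset Printing Implicit Defensive.

Inductive fml (A : Type) : Type :=
| FTop | FBot
| FAtom of A
| FNot of fml A
| FAnd of fml A & fml A
| FOr of fml A & fml A.
Arguments FTop {A}. Arguments FBot {A}.

Fixpoint feval (A : Type) (s : A -> bool) (f : fml A) : bool :=
  match f with
  | FTop => true | FBot => false
  | FAtom a => s a
  | FNot g => ~~ feval s g
  | FAnd g h => feval s g && feval s h
  | FOr g h => feval s g || feval s h
  end.

Fixpoint fmap (A B : Type) (r : A -> B) (f : fml A) : fml B :=
  match f with
  | FTop => FTop | FBot => FBot
  | FAtom a => FAtom (r a)
  | FNot g => FNot (fmap r g)
  | FAnd g h => FAnd (fmap r g) (fmap r h)
  | FOr g h => FOr (fmap r g) (fmap r h)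
  end.

Fixpoint fatoms (A : Type) (f : fml A) : seq A :=
  match f with
  | FTop | FBot => [::]
  | FAtom a => [:: a]
  | FNot g => fatoms g
  | FAnd g h | FOr g h => fatoms g ++ fatoms h
  end.

Definition FImp (A : Type) (f g : fml A) := FOr (FNot f) g.
Definition FIff (A : Type) (f g : fml A) := FAnd (FImp f g) (FImp g f).
Definition fOrs (A : Type) (s : seq (fml A)) := foldr (@FOr A) FBot s.
Definition fAnds (A : Type) (s : seq (fml A)) := foldr (@FAnd A) FTop s.

(* "exactly one of the atoms x w, w in s" (s duplicate-free) *)
Definition fExactlyOne (W : eqType) (A : Type) (x : W -> A) (s : seq W) : fml A :=
  fOrs [seq FAnd (FAtom (x w))
                 (fAnds [seq FNot (FAtom (x w')) | w' <- s & w' != w]) | w <- s].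

Record wpmaxsat (X : Type) := WPMS {
  hard : seq (fml X);
  soft : seq (seq (X * bool) * nat)
}.

Definition lit_sat (X : Type) (a : X -> bool) (l : X * bool) := a l.1 == l.2.
Definition clause_sat (X : Type) (a : X -> bool) (c : seq (X * bool)) :=
  has (lit_sat a) c.
Definition hard_sat (X : Type) (I : wpmaxsat X) (a : X -> bool) :=
  all (feval a) (hard I).
Definition cost (X : Type) (I : wpmaxsat X) (a : X -> bool) : nat :=
  \sum_(s <- soft I | ~~ clause_sat a s.1) s.2.

(* optimal cost; None encodes infinity (hard constraints unsatisfiable) *)
Definition optimal_cost_is (X : Type) (I : wpmaxsat X) (oc : option nat) : Prop :=
  match oc with
  | None => forall a, ~~ hard_sat I a
  | Some c => (exists a, hard_sat I a /\ cost I a = c) /\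
              (forall a, hard_sat I a -> c <= cost I a)
  end.

Section SUT.
Variables (P V : finType) (d : P -> {set V}) (phi : fml (P * V)) (t : nat).

Definition is_test (A : {ffun P -> V}) : bool :=
  [forall p, A p \in d p] && feval (fun pv : P * V => A pv.1 == pv.2) phi.

Definition is_ttuple (tau : {set P * V}) : bool :=
  [&& #|tau| == t,
      [forall x in tau, x.2 \in d x.1] &
      [forall x in tau, forall y in tau, (x.1 == y.1) ==> (x == y)]].

Definition covers (A : {ffun P -> V}) (tau : {set P * V}) : bool :=
  [forall x in tau, A x.1 == x.2].

Definition allowed (tau : {set P * V}) : bool :=
  [exists A, is_test A && covers A tau].

Definition Ta : {set {set P * V}} := [set tau | is_ttuple tau && allowed tau].

Definition is_CA (n : nat) : Prop :=
  exists L : n.-tuple {ffun P -> V},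
    all is_test L /\ forall tau, tau \in Ta -> has (fun A => covers A tau) L.

Definition is_CAN (k : nat) : Prop := is_CA k /\ forall n, is_CA n -> k <= n.

Definition Tmax (n : nat) : nat :=
  \max_(L : n.-tuple {ffun P -> V} | all is_test L)
     #|[set tau | is_ttuple tau && has (fun A => covers A tau) L]|.

Inductive phivar : Type :=
| Xv of nat & P & V
| Ci of nat & {set P * V}
| Cv of {set P * V}
| Uv of nat.

Variables (N lb : nat).

Definition idxN := iota 1 N.
Definition mm := N - (lb + 1).

Definition hard_X : seq (fml phivar) :=
  flatten [seq [seq fExactlyOne (fun v => Xv i p v) (enum (d p)) | p <- enum P]
          | i <- idxN].
Definition hard_SUTX : seq (fml phivar) :=
  [seq fmap (fun pv : P * V => Xv i pv.1 pv.2) phi | i <- idxN].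
Definition hard_CX : seq (fml phivar) :=
  flatten (flatten
    [seq [seq [seq FImp (FAtom (Ci i tau)) (FAtom (Xv i pv.1 pv.2)) | pv <- enum tau]
         | tau <- enum Ta] | i <- idxN]).
Definition hard_RC : seq (fml phivar) :=
  [seq FIff (FAtom (Cv tau)) (fOrs [seq FAtom (Ci i tau) | i <- idxN])
  | tau <- enum Ta].
(* i in {lb+2, ..., N-1} *)
Definition hard_BSU : seq (fml phivar) :=
  [seq FImp (FAtom (Uv i.+1)) (FAtom (Uv i)) | i <- iota (lb + 2) (N - (lb + 2))].
(* i in {lb+2, ..., N} *)
Definition hard_CU : seq (fml phivar) :=
  flatten [seq [seq FImp (FAtom (Ci i tau)) (FAtom (Uv i)) | tau <- enum Ta]
          | i <- iota (lb + 2) mm].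

Definition soft_Phi : seq (seq (phivar * bool) * nat) :=
  [seq ([:: (Uv i, false)], 1) | i <- iota (lb + 2) mm] ++
  [seq ([:: (Cv tau, true)], mm + 1) | tau <- enum Ta].

Definition Phi : wpmaxsat phivar :=
  WPMS (hard_X ++ hard_SUTX ++ hard_CX ++ hard_RC ++ hard_BSU ++ hard_CU) soft_Phi.

End SUT.

From mathcomp Require Import all_boot zify.
Set Implicit Arguments. Unset Strict Implicit. Unset Printing Implicit Defensive.

(* The optimum of Phi is the least value of
     (|L| - (lb+1)) + (|T_a| - #tuples covered by L) * (m+1)
   over lists L of lb+1 to N test cases.  A list L is encoded by taking its test cases as the
   first |L| rows and setting u_i exactly for i <= |L|, which costs exactly that value;
   conversely the rows of a hard-consistent assignment, cut at its last true u_i, form such a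
   list of no larger value.  If CAN <= N, a covering array of size CAN is optimal: one
   uncovered tuple costs m+1, more than any saving on the u_i.  If N < CAN, a list of fewer
   than N test cases misses some allowed tuple, and one more test case covering it shows
   that it covers fewer than T(N) tuples; hence every saved row is paid for by an uncovered
   tuple, and a list of N test cases covering T(N) tuples is optimal. *)

Lemma all_flatten (T : Type) (p : pred T) (ss : seq (seq T)) :
  all p (flatten ss) = all (all p) ss.
Proof. by elim: ss => //= s ss IH; rewrite all_cat IH. Qed.

Lemma has_iota_nth (T : Type) (x0 : T) (q : pred T) (s : seq T) n :
  size s <= n ->
  has q s = has (fun i => (i <= size s) && q (nth x0 s i.-1)) (iota 1 n).
Proof.
move=> sn; apply/(has_nthP x0)/hasP => [[i lt_is qi] | [i]].
  by exists i.+1; rewrite ?mem_iota ?lt_is //=; lia.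
rewrite mem_iota => /andP [i_gt0 _] /andP [le_is qi].
by exists i.-1 => //; lia.
Qed.

Lemma count_leq_iota (a n k : nat) : a <= k.+1 <= a + n ->
  count (fun i => i <= k) (iota a n) = k.+1 - a.
Proof.
move=> bounds; have -> : n = (k.+1 - a) + (n - (k.+1 - a)) by lia.
rewrite iotaD count_cat (@eq_in_count _ _ predT) ?count_predT ?size_iota; last first.
  by move=> i; rewrite mem_iota /=; lia.
rewrite (@eq_in_count _ _ pred0) ?count_pred0 ?addn0 // => i.
by rewrite mem_iota /=; lia.
Qed.

Lemma count_iota_ge_prefix (u : pred nat) a n k :
  k <= n -> (forall i, a <= i < a + k -> u i) -> k <= count u (iota a n).
Proof.
move=> kn uk; rewrite -(subnKC kn) iotaD count_cat.
apply: leq_trans (leq_addr _ _); rewrite (@eq_in_count _ _ predT) ?count_predT ?size_iota //.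
by move=> i; rewrite mem_iota => /uk.
Qed.

Lemma downward_closed_nat (u : pred nat) (a b : nat) :
  (forall i, a <= i < b -> u i.+1 -> u i) ->
  forall i k, a <= k <= i -> i <= b -> u i -> u k.
Proof.
move=> uS; elim=> [|i IH] k ki ib ui; first by have -> : k = 0 by lia.
have [-> // | ne_ki] := eqVneq k i.+1.
by apply: IH; [lia | lia | apply: uS => //; lia].
Qed.

Lemma feval_fOrs (A : Type) (s : A -> bool) (fs : seq (fml A)) :
  feval s (fOrs fs) = has (feval s) fs.
Proof. by elim: fs => //= f fs ->. Qed.

Lemma feval_fAnds (A : Type) (s : A -> bool) (fs : seq (fml A)) :
  feval s (fAnds fs) = all (feval s) fs.
Proof. by elim: fs => //= f fs ->. Qed.

Lemma feval_fmap (A B : Type) (r : A -> B) (s : B -> bool) (f : fml A) :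
  feval s (fmap r f) = feval (s \o r) f.
Proof. by elim: f => //= [g -> | g -> h -> | g -> h ->]. Qed.

Lemma eq_in_feval (A : eqType) (s1 s2 : A -> bool) (f : fml A) :
  {in fatoms f, s1 =1 s2} -> feval s1 f = feval s2 f.
Proof.
elim: f => //= [x | g IH | g IHg h IHh | g IHg h IHh] eq_s.
- by apply: eq_s; rewrite inE.
- by rewrite IH.
- by rewrite IHg ?IHh // => x x_in; apply: eq_s; rewrite mem_cat x_in ?orbT.
- by rewrite IHg ?IHh // => x x_in; apply: eq_s; rewrite mem_cat x_in ?orbT.
Qed.

Lemma fExactlyOneP (W : eqType) (A : Type) (s : A -> bool) (x : W -> A) (ws : seq W) :
  feval s (fExactlyOne x ws) <->
  exists2 w, w \in ws & {in ws, forall w', s (x w') = (w' == w)}.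
Proof.
rewrite /fExactlyOne feval_fOrs has_map.
split => [/hasP [w ws_w] | [w ws_w sw]] /=.
  rewrite feval_fAnds all_map all_filter => /andP [sw /allP sw'].
  exists w => // w' /sw' /=.
  by case: eqVneq => [-> _ | _ /negbTE //]; apply: sw.
apply/hasP; exists w => //=; rewrite sw // eqxx feval_fAnds all_map all_filter.
by apply/allP => w' ws_w' /=; rewrite sw //; case: eqVneq.
Qed.

Section Coverage.
Variables (P V : finType) (d : P -> {set V}) (phi : fml (P * V)) (t : nat).
Local Notation test := (is_test d phi).
Local Notation Ta := (Ta d phi t).
Local Notation Tmax := (Tmax d phi t).

Definition coverage (L : seq {ffun P -> V}) : {set {set P * V}} :=
  [set tau | is_ttuple d t tau && has (fun A => covers A tau) L].

Lemma mem_coverage L tau :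
  all test L -> (tau \in coverage L) = (tau \in Ta) && has (fun A => covers A tau) L.
Proof.
move=> L_test; rewrite !inE; case: (is_ttuple _ _ _) => //=.
case L_tau: (has _ _); rewrite ?andbF ?andbT //.
by case/hasP: L_tau => A L_A A_tau; apply/esym/existsP; exists A; rewrite A_tau (allP L_test _ L_A).
Qed.

Lemma coverage_sub_Ta L : all test L -> coverage L \subset Ta.
Proof. by move=> L_test; apply/subsetP => tau; rewrite mem_coverage // => /andP []. Qed.

Lemma card_uncovered L : all test L -> #|Ta :\: coverage L| = #|Ta| - #|coverage L|.
Proof. by move=> L_test; rewrite cardsD (setIidPr (coverage_sub_Ta L_test)). Qed.

Lemma Tmax_le_Ta n : Tmax n <= #|Ta|.
Proof. by apply/bigmax_leqP => L L_test; apply/subset_leq_card/coverage_sub_Ta. Qed.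

Section Padding.
Variable A0 : {ffun P -> V}.
Hypothesis A0_test : test A0.

(* Tmax n ranges over lists of length exactly n: pad L with copies of A0. *)
Lemma coverage_le_Tmax n L : all test L -> size L <= n -> #|coverage L| <= Tmax n.
Proof.
move=> L_test sLn.
have size_pad : size (L ++ nseq (n - size L) A0) == n by rewrite size_cat size_nseq subnKC.
have pad_test : all test (Tuple size_pad) by rewrite /= all_cat L_test all_nseq A0_test orbT.
apply: leq_trans (@leq_bigmax_cond _ (fun L : n.-tuple _ => all test L)
                    (fun L => #|coverage L|) _ pad_test).
by apply/subset_leq_card/subsetP => tau; rewrite !inE /= has_cat => /andP [-> ->].
Qed.

Lemma Tmax_attained n : exists2 L : n.-tuple {ffun P -> V}, all test L & #|coverage L| = Tmax n.
Proof.
have : 0 < #|[pred L : n.-tuple {ffun P -> V} | all test L]|.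
  by apply/card_gt0P; exists (nseq_tuple n A0); rewrite inE /= all_nseq A0_test orbT.
by case/(eq_bigmax_cond (fun L : n.-tuple _ => #|coverage L|)) => L; exists L.
Qed.

Variable CAN : nat.
Hypothesis HCAN : is_CAN d phi t CAN.

Lemma CAN_le_size L : all test L -> Ta \subset coverage L -> CAN <= size L.
Proof.
move=> L_test /subsetP Ta_cov; apply: HCAN.2; exists (in_tuple L); split => // tau Ta_tau.
by have := Ta_cov _ Ta_tau; rewrite mem_coverage // Ta_tau.
Qed.

Lemma Tmax_full n : CAN <= n -> Tmax n = #|Ta|.
Proof.
move=> CAN_n; apply/eqP; rewrite eqn_leq Tmax_le_Ta /=.
have [L [L_test L_cov]] := HCAN.1.
apply: leq_trans (coverage_le_Tmax L_test _); last by rewrite size_tuple.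
by apply/subset_leq_card/subsetP => tau Ta_tau; rewrite mem_coverage // Ta_tau L_cov.
Qed.

(* A list shorter than CAN misses an allowed tuple; adding a test case covering it
   gives one more covered tuple, still within the budget n. *)
Lemma coverage_lt_Tmax n L :
  all test L -> size L < n -> size L < CAN -> #|coverage L| < Tmax n.
Proof.
move=> L_test sLn sL_CAN.
have /subsetPn [tau Ta_tau tau_unc] : ~~ (Ta \subset coverage L).
  by apply: contraL sL_CAN => /(CAN_le_size L_test); rewrite -leqNgt.
move: (Ta_tau); rewrite inE => /andP [_ /existsP [A /andP [A_test A_tau]]].
have LA_test : all test (rcons L A) by rewrite all_rcons A_test.
apply: leq_trans (coverage_le_Tmax LA_test _); last by rewrite size_rcons.
have card_U1 : #|tau |: coverage L| = #|coverage L|.+1 by rewrite cardsU1 tau_unc.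
rewrite -card_U1.
apply/subset_leq_card/subsetP => tau'; rewrite in_setU1 !mem_coverage //.
by rewrite -cats1 has_cat /= => /orP [/eqP -> | /andP [-> ->]]; rewrite ?Ta_tau ?A_tau ?orbT.
Qed.

End Padding.
End Coverage.

Section Instance.
Variables (P V : finType) (d : P -> {set V}) (phi : fml (P * V)) (t N lb : nat).
Local Notation test := (is_test d phi).
Local Notation Ta := (Ta d phi t).
Local Notation Tmax := (Tmax d phi t).
Local Notation coverage := (coverage d t).
Local Notation m := (mm N lb).
Local Notation Phi := (Phi d phi t N lb).

Definition list_cost (L : seq {ffun P -> V}) : nat :=
  (size L - (lb + 1)) + (#|Ta| - #|coverage L|) * (m + 1).

Definition Phi_optimum (CAN : nat) : nat :=
  (if CAN <= N then CAN - (lb + 1) else N - (lb + 1)) + (#|Ta| - Tmax N) * (m + 1).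

Lemma cost_Phi a : cost Phi a =
  count (fun i => a (Uv P V i)) (iota (lb + 2) m) + #|[set tau in Ta | ~~ a (Cv tau)]| * (m + 1).
Proof.
rewrite /cost /= /soft_Phi big_cat !big_map -sum1_count big_enum_cond /= -sum_nat_const.
by congr (_ + _); apply: eq_bigl => x; rewrite /lit_sat ?inE /= orbF; case: (a _).
Qed.

Lemma hard_sat_PhiP a : hard_sat Phi a <->
  [/\ {in idxN N, forall i,
        (forall p, exists2 v, v \in d p & {in d p, forall w, a (Xv i p w) = (w == v)}) /\
        feval (fun pv : P * V => a (Xv i pv.1 pv.2)) phi},
      {in idxN N, forall i, {in Ta, forall tau : {set P * V}, {in tau, forall pv : P * V,
        a (Ci i tau) ==> a (Xv i pv.1 pv.2)}}},
      {in Ta, forall tau, a (Cv tau) = has (fun i => a (Ci i tau)) (idxN N)},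
      {in iota (lb + 2) (N - (lb + 2)), forall i, a (Uv P V i.+1) ==> a (Uv P V i)} &
      {in iota (lb + 2) m, forall i, {in Ta, forall tau, a (Ci i tau) ==> a (Uv P V i)}}].
Proof.
rewrite /hard_sat /= !all_cat /hard_X /hard_SUTX /hard_CX /hard_RC /hard_BSU /hard_CU.
rewrite !all_flatten !all_map.
split => [/and5P [/allP hX /allP hS /allP hCX /allP hRC /andP [/allP hB /allP hU]] | ].
  split=> [i /[dup] /hX /= + /hS /= | i /hCX /= | tau | i /hB /= | i /hU /=].
  - rewrite all_map feval_fmap => /allP X_i S_i; split => // p.
    have /fExactlyOneP [v] := X_i p (mem_enum _ p); rewrite mem_enum => dv Xv_v.
    by exists v => // w; rewrite -mem_enum; apply: Xv_v.
  - rewrite all_map => /allP CX tau; rewrite -mem_enum => /CX /=.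
    by rewrite all_map => /allP CX_tau pv; rewrite -mem_enum implybE => /CX_tau.
  - rewrite -mem_enum => /hRC /=; rewrite feval_fOrs has_map -!implybE.
    by case/andP=> /implyP Cv_has /implyP has_Cv; apply/idP/idP.
  - by rewrite implybE.
  - by rewrite all_map => /allP U_i tau; rewrite -mem_enum implybE => /U_i.
case=> hXS hCX hRC hB hU; apply/and5P; split; last (apply/andP; split).
- apply/allP => i /hXS [X_i _] /=; rewrite all_map; apply/allP => p _ /=.
  have [v dv Xv_v] := X_i p; apply/fExactlyOneP; exists v; rewrite ?mem_enum // => w.
  by rewrite mem_enum; apply: Xv_v.
- by apply/allP => i /hXS [_ S_i] /=; rewrite feval_fmap.
- apply/allP => i /hCX CX_i /=; rewrite all_map; apply/allP => tau.
  rewrite mem_enum => /CX_i CX_it /=; rewrite all_map; apply/allP => pv.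
  by rewrite mem_enum => /CX_it; rewrite /= implybE.
- apply/allP => tau; rewrite mem_enum => /hRC /=.
  by rewrite feval_fOrs has_map => ->; rewrite -!implybE !implybb.
- by apply/allP => i /hB /=; rewrite implybE.
- apply/allP => i /hU U_i /=; rewrite all_map; apply/allP => tau.
  by rewrite mem_enum => /U_i; rewrite /= implybE.
Qed.

Hypothesis lb_lt_N : lb + 1 <= N.

Section Optimum.
Variable A0 : {ffun P -> V}.
Hypothesis A0_test : test A0.
Variable CAN : nat.
Hypothesis HCAN : is_CAN d phi t CAN.
Hypothesis lb_lt_CAN : lb < CAN.

Lemma Phi_optimum_le_list_cost L :
  all test L -> lb + 1 <= size L <= N -> Phi_optimum CAN <= list_cost L.
Proof.
move=> L_test /andP [lb_L L_N]; rewrite /Phi_optimum /list_cost /mm.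
have cov_Tmax := coverage_le_Tmax t A0_test L_test L_N.
have Tmax_Ta := Tmax_le_Ta d phi t N.
case: (leqP CAN N) => [CAN_N | N_CAN].
  rewrite (Tmax_full A0_test HCAN CAN_N) subnn mul0n addn0.
  have [Ta_cov | not_cov] := boolP (Ta \subset coverage L).
    by apply: leq_trans (leq_addr _ _); apply/leq_sub2r/(CAN_le_size HCAN L_test Ta_cov).
  have : #|coverage L| < #|Ta| by rewrite proper_card // properE coverage_sub_Ta.
  nia.
have [L_lt_N | L_eq_N] : size L < N \/ size L = N by lia.
  by have := coverage_lt_Tmax A0_test HCAN L_test L_lt_N (ltn_trans L_lt_N N_CAN); nia.
by rewrite L_eq_N; nia.
Qed.

Lemma list_cost_attains_Phi_optimum :
  exists L, [/\ all test L, lb + 1 <= size L <= N & list_cost L = Phi_optimum CAN].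
Proof.
rewrite /Phi_optimum; case: (leqP CAN N) => [CAN_N | N_CAN].
  have [L [L_test L_cov]] := HCAN.1.
  have cov_L : coverage L = Ta.
    apply/eqP; rewrite eqEsubset coverage_sub_Ta //; apply/subsetP => tau Ta_tau.
    by rewrite (mem_coverage t tau L_test) Ta_tau L_cov.
  exists L; rewrite /list_cost size_tuple cov_L (Tmax_full A0_test HCAN CAN_N).
  by split => //; lia.
have [L L_test L_cov] := Tmax_attained t A0_test N.
by exists L; rewrite /list_cost size_tuple L_cov; split => //; lia.
Qed.

End Optimum.

Section ListAssignment.
Variable A0 : {ffun P -> V}.
Hypothesis A0_test : test A0.
Variable L : seq {ffun P -> V}.
Hypotheses (L_test : all test L) (L_N : size L <= N).

(* Row i (counted from 1) is the i-th test case of L; rows past size L are padded with A0 and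
   switched off, since no c^i_tau or u_i holds for them. *)
Definition list_assignment (x : phivar P V) : bool :=
  match x with
  | Xv i p v => nth A0 L i.-1 p == v
  | Ci i tau => (i <= size L) && covers (nth A0 L i.-1) tau
  | Cv tau => has (fun A => covers A tau) L
  | Uv i => i <= size L
  end.

Lemma nth_test i : test (nth A0 L i).
Proof. by case: (ltnP i (size L)) => [/(mem_nth A0)/(allP L_test) | /(nth_default A0) ->]. Qed.

Lemma list_assignment_hard : hard_sat Phi list_assignment.
Proof.
apply/hard_sat_PhiP.
split=> [i _ | i _ tau _ pv pv_tau | tau _ | i _ | i _ tau _] /=.
- have /andP [/forallP L_d L_phi] := nth_test i.-1; split => // p.
  by exists (nth A0 L i.-1 p) => // w _; apply: eq_sym.
- by apply/implyP => /andP [_ /forall_inP]; apply.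
- exact: has_iota_nth.
- by apply/implyP => /ltnW.
- by apply/implyP => /andP [].
Qed.

Lemma cost_list_assignment : lb + 1 <= size L -> cost Phi list_assignment = list_cost L.
Proof.
move=> lb_L; rewrite cost_Phi /list_cost /= count_leq_iota; last by rewrite /mm; lia.
have -> : [set tau in Ta | ~~ has (fun A => covers A tau) L] = Ta :\: coverage L.
  apply/setP => tau; rewrite in_setD (mem_coverage t tau L_test) inE.
  by case: (_ \in Ta); rewrite ?andbT.
by rewrite card_uncovered // addnS subSS.
Qed.

End ListAssignment.

Section HardAssignment.
Hypothesis atoms_in_domain : forall pv, pv \in fatoms phi -> pv.2 \in d pv.1.
Variable A0 : {ffun P -> V}.
Variable a : phivar P V -> bool.
Hypothesis a_hard : hard_sat Phi a.

Definition assignment_row (i : nat) : {ffun P -> V} :=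
  [ffun p => odflt (A0 p) [pick v in d p | a (Xv i p v)]].

Lemma assignment_row_spec i p : i \in idxN N ->
  assignment_row i p \in d p /\ {in d p, forall v, a (Xv i p v) = (assignment_row i p == v)}.
Proof.
move=> iN; have [/(_ i iN) [/(_ p) [w dw a_w] _] _ _ _ _] := (hard_sat_PhiP a).1 a_hard.
suff -> : assignment_row i p = w by split=> // v /a_w; rewrite eq_sym.
rewrite ffunE; case: pickP => [v /andP [dv] | /(_ w)]; first by rewrite a_w // => /eqP.
by rewrite dw a_w // eqxx.
Qed.

Lemma assignment_row_test i : i \in idxN N -> test (assignment_row i).
Proof.
move=> iN; apply/andP; split; first by apply/forallP => p; case: (assignment_row_spec p iN).
have [/(_ i iN) [_ S_i] _ _ _ _] := (hard_sat_PhiP a).1 a_hard.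
rewrite (eq_in_feval (s2 := fun pv : P * V => a (Xv i pv.1 pv.2))) // => pv.
by move=> /atoms_in_domain dpv; case: (assignment_row_spec pv.1 iN) => _ /(_ _ dpv) ->.
Qed.

Lemma assignment_row_covers i tau : i \in idxN N -> tau \in Ta -> a (Ci i tau) ->
  covers (assignment_row i) tau.
Proof.
move=> iN Ta_tau a_Ci; have [_ /(_ i iN _ Ta_tau) CX _ _ _] := (hard_sat_PhiP a).1 a_hard.
move: (Ta_tau); rewrite inE => /andP [/and3P [_ /forall_inP tau_d _] _].
apply/forall_inP => pv pv_tau; case: (assignment_row_spec pv.1 iN) => _ <-; last exact: tau_d.
exact: (implyP (CX pv pv_tau) a_Ci).
Qed.

Local Notation nb_u := (count (fun i => a (Uv P V i)) (iota (lb + 2) m)).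

(* By (BSU) the true u_i form the initial segment u_(lb+2), ..., u_(lb+1+nb_u); (CU) then
   bounds i. *)
Lemma Ci_row_bound i tau : i \in idxN N -> tau \in Ta -> a (Ci i tau) -> i <= lb + 1 + nb_u.
Proof.
move=> iN Ta_tau a_Ci; have [_ _ _ BSU CU] := (hard_sat_PhiP a).1 a_hard.
case: (leqP i (lb + 1)) => [| lb_i]; first lia.
have i_u : i \in iota (lb + 2) m by move: iN; rewrite !mem_iota /mm; lia.
have a_Ui := implyP (CU i i_u tau Ta_tau) a_Ci.
have u_down k : lb + 2 <= k < N -> a (Uv P V k.+1) -> a (Uv P V k).
  by move=> k_range; apply/implyP/BSU; rewrite mem_iota; lia.
suff : i - (lb + 1) <= nb_u by lia.
apply: count_iota_ge_prefix; first by move: i_u; rewrite mem_iota /mm; lia.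
move=> k k_range; have i_N : i <= N by move: iN; rewrite mem_iota; lia.
by apply: (downward_closed_nat u_down (i := i)) a_Ui; lia.
Qed.

Lemma list_cost_le_cost :
  exists L, [/\ all test L, lb + 1 <= size L <= N & list_cost L <= cost Phi a].
Proof.
have [_ _ RC _ _] := (hard_sat_PhiP a).1 a_hard.
have nb_u_le_m : nb_u <= m by rewrite -[X in _ <= X](size_iota (lb + 2) m) count_size.
set L := [seq assignment_row i | i <- iota 1 (lb + 1 + nb_u)].
have row_in_idxN i : i \in iota 1 (lb + 1 + nb_u) -> i \in idxN N.
  by move: nb_u_le_m; rewrite !mem_iota /mm; lia.
have L_test : all test L.
  by apply/allP => _ /mapP [i /row_in_idxN iN ->]; apply: assignment_row_test.
exists L; rewrite /list_cost size_map size_iota addKn; split => //.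
  by move: nb_u_le_m; rewrite /mm; lia.
rewrite cost_Phi leq_add2l leq_mul2r -(card_uncovered t L_test); apply/orP; right.
apply/subset_leq_card/subsetP => tau; rewrite in_setD (mem_coverage t tau L_test) inE.
case/andP => + Ta_tau; rewrite Ta_tau /=; apply: contra; rewrite RC // => /hasP [i iN a_Ci].
apply/hasP; exists (assignment_row i); last exact: assignment_row_covers.
by apply: map_f; have := Ci_row_bound iN Ta_tau a_Ci; move: iN; rewrite !mem_iota; lia.
Qed.

End HardAssignment.
End Instance.

Theorem proposition11 (P V : finType) (d : P -> {set V}) (phi : fml (P * V))
    (t N lb CAN : nat)
    (Hdom : forall p, d p != set0)
    (Hatoms : forall pv, pv \in fatoms phi -> pv.2 \in d pv.1)
    (Htest : exists A, is_test d phi A)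
    (Ht : 1 <= t <= #|P|)
    (HCAN : is_CAN d phi t CAN)
    (HN : 1 <= N) (Hlb : lb < CAN) (HlbN : lb + 1 <= N) :
  optimal_cost_is (Phi d phi t N lb)
    (Some ((if CAN <= N then CAN - (lb + 1) else N - (lb + 1))
           + (#|Ta d phi t| - Tmax d phi t N) * (mm N lb + 1))).
Proof.
case: Htest => A0 A0_test; split.
  have [L [L_test /andP [lb_L L_N] cost_L]] :=
    list_cost_attains_Phi_optimum HlbN A0_test HCAN Hlb.
  exists (list_assignment A0 L); split; first exact: list_assignment_hard.
  by rewrite (cost_list_assignment t HlbN A0_test L_test L_N lb_L).
move=> a a_hard; have [L [L_test L_range le_cost]] := list_cost_le_cost HlbN Hatoms A0 a_hard.
exact: leq_trans (Phi_optimum_le_list_cost HlbN A0_test HCAN Hlb L_test L_range) le_cost.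
Qed.
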